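(* Let $m\in[0,1]$ and $\varepsilon\ge0$. For all $z_1,z_2\in\mathbb{C}$ (with $z_1z_2\neq0$ if $m=\varepsilon=0$), setting $Z=\big((|z_1|^2+\varepsilon)^{\frac{m-1}{2}}z_1-(|z_2|^2+\varepsilon)^{\frac{m-1}{2}}z_2\big)\overline{(z_1-z_2)}$, we have $$2\sqrt m\,|\Im Z|\le(1-m)\Re Z.$$
   Context: When $m=1$ the factor $(|z|^2+\varepsilon)^0$ equals $1$. For $m<1$, $\varepsilon=0$ and $z=0$ the expression $(|z|^2)^{\frac{m-1}{2}}z$ is interpreted as $0$ (when $m>0$). *)

From HB Require Import structures.
From mathcomp Require Import all_boot all_order all_algebra.
From mathcomp Require Import all_classical all_reals all_analysis.
From mathcomp Require Import complex.
Set Implicit Arguments. Unset Strict Implicit. Unset Printing Implicit Defensive.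
Import Order.TTheory GRing.Theory Num.Theory.
Local Open Scope ring_scope.

(* F_{m,eps}(z) = (|z|^2 + eps)^((m-1)/2) z, with the real power powR.
   powR a 0 = 1 (so the factor is 1 when m = 1, for every a), and
   powR 0 x = 0 for x <> 0 (so for m < 1, eps = 0, z = 0 the value is 0,
   matching the paper's convention). *)
Definition Fme (R : realType) (m eps : R) (z : R[i]) : R[i] :=
  ((powR (Normc.normc z ^+ 2 + eps) ((m - 1) / 2))%:C * z)%C.

Definition Zme (R : realType) (m eps : R) (z1 z2 : R[i]) : R[i] :=
  ((Fme m eps z1 - Fme m eps z2) * conjc (z1 - z2))%C.

(** Write [Fme m eps z = a(|z|) z] with [a(n) = (n^2 + eps)^((m-1)/2)].  Then
    [Re Z = a1 |z1|^2 + a2 |z2|^2 - (a1 + a2) Re (z1 * conj z2)] and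
    [|Im Z| = |a1 - a2| |Im (z1 * conj z2)|], so by Cauchy--Schwarz for the pair
    (Re, Im) of [z1 * conj z2] the claim follows from an inequality [sector_cond]
    between the two points [(n_i, g_i) = (|z_i|, a_i |z_i|)] of the profile
    [g(n) = n a(n)].  For the pure power [g(n) = n^m] this two-point inequality is
    a one-variable statement in [r = n1 / n2 >= 1], proved by differentiating
    and using the weighted AM-GM (Bernoulli) inequality.  It then transfers to
    [g(n) = n a(n)] because [g(n) / n] is nonincreasing while [g(n) / n^m] is
    nondecreasing. *)

From HB Require Import structures.
From mathcomp Require Import all_boot all_order all_algebra.
From mathcomp Require Import all_classical all_reals all_analysis.
From mathcomp Require Import complex ring lra.
Set Implicit Arguments.
Unset Strict Implicit.
Unset Printing Implicit Defensive.

Import Order.TTheory GRing.Theory Num.Theory.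
Local Open Scope ring_scope.

Section SectorCondition.
Variable R : realFieldType.
Implicit Types m n g : R.

Definition sector_cond m n1 g1 n2 g2 :=
  4 * m * (g1 * n2 - g2 * n1) ^+ 2 <=
  (1 - m) ^+ 2 * (g1 ^+ 2 - g2 ^+ 2) * (n1 ^+ 2 - n2 ^+ 2).

Lemma sector_condC m n1 g1 n2 g2 :
  sector_cond m n1 g1 n2 g2 -> sector_cond m n2 g2 n1 g1.
Proof. by rewrite /sector_cond => h; nra. Qed.

Lemma sector_condM m n1 g1 n2 g2 n g :
  sector_cond m n1 g1 n2 g2 -> sector_cond m (n1 * n) (g1 * g) (n2 * n) (g2 * g).
Proof.
rewrite /sector_cond => h.
have -> : 4 * m * (g1 * g * (n2 * n) - g2 * g * (n1 * n)) ^+ 2 =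
  (g * n) ^+ 2 * (4 * m * (g1 * n2 - g2 * n1) ^+ 2) by ring.
have -> : (1 - m) ^+ 2 * ((g1 * g) ^+ 2 - (g2 * g) ^+ 2) * ((n1 * n) ^+ 2 - (n2 * n) ^+ 2) =
  (g * n) ^+ 2 * ((1 - m) ^+ 2 * (g1 ^+ 2 - g2 ^+ 2) * (n1 ^+ 2 - n2 ^+ 2)) by ring.
by rewrite ler_wpM2l ?sqr_ge0.
Qed.

Lemma sector_cond_scale m n1 n2 t1 t2 c1 c2 :
  0 <= m -> 0 <= n2 <= n1 -> 0 <= t1 -> 0 <= c2 <= c1 ->
  c1 * t1 * n2 <= c2 * t2 * n1 ->
  sector_cond m n1 t1 n2 t2 -> sector_cond m n1 (c1 * t1) n2 (c2 * t2).
Proof.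
rewrite /sector_cond => m0 /andP[n20 n21] t10 /andP[c20 c21] ct h.
have ct1 : c2 * t1 <= c1 * t1 by rewrite ler_wpM2r.
have gap_ge0 : 0 <= c2 * t2 * n1 - c1 * t1 * n2 by rewrite subr_ge0.
have gap_le : c2 * t2 * n1 - c1 * t1 * n2 <= c2 * (t2 * n1 - t1 * n2).
  by have := ler_wpM2r n20 ct1; lra.
have gap_sqr : (c1 * t1 * n2 - c2 * t2 * n1) ^+ 2 <= c2 ^+ 2 * (t1 * n2 - t2 * n1) ^+ 2.
  have : (c2 * t2 * n1 - c1 * t1 * n2) ^+ 2 <= (c2 * (t2 * n1 - t1 * n2)) ^+ 2.
    by rewrite ler_sqr ?nnegrE ?(le_trans gap_ge0 gap_le).
  lra.
have t_sqr : c2 ^+ 2 * (t1 ^+ 2 - t2 ^+ 2) <= (c1 * t1) ^+ 2 - (c2 * t2) ^+ 2.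
  have : (c2 * t1) ^+ 2 <= (c1 * t1) ^+ 2 by rewrite ler_sqr ?nnegrE ?mulr_ge0 // (le_trans c20 c21).
  by rewrite exprMn; lra.
have n_sqr : 0 <= n1 ^+ 2 - n2 ^+ 2 by rewrite subr_ge0 ler_sqr ?nnegrE ?(le_trans n20).
apply: (le_trans (ler_wpM2l _ gap_sqr)); first by rewrite mulr_ge0.
rewrite mulrCA; apply: (le_trans (ler_wpM2l (sqr_ge0 c2) h)).
have -> : c2 ^+ 2 * ((1 - m) ^+ 2 * (t1 ^+ 2 - t2 ^+ 2) * (n1 ^+ 2 - n2 ^+ 2)) =
  (1 - m) ^+ 2 * (c2 ^+ 2 * (t1 ^+ 2 - t2 ^+ 2)) * (n1 ^+ 2 - n2 ^+ 2) by ring.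
by rewrite ler_wpM2r // ler_wpM2l ?sqr_ge0.
Qed.

End SectorCondition.

Lemma sector_cond_bound (R : rcfType) (m a b n1 n2 u v : R) :
  0 <= m -> m <= 1 -> 0 <= a -> 0 <= b -> u ^+ 2 + v ^+ 2 = (n1 * n2) ^+ 2 ->
  sector_cond m n1 (a * n1) n2 (b * n2) ->
  2 * Num.sqrt m * `|(a - b) * v| <= (1 - m) * (a * n1 ^+ 2 + b * n2 ^+ 2 - (a + b) * u).
Proof.
rewrite /sector_cond => m0 m1 a0 b0 uv h.
set K := (1 - m) * (a + b); set L := 2 * Num.sqrt m * `|a - b|.
set M := (1 - m) * (a * n1 ^+ 2 + b * n2 ^+ 2).
have M0 : 0 <= M by rewrite mulr_ge0 ?subr_ge0 // addr_ge0 // mulr_ge0 ?sqr_ge0.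
have L2 : L ^+ 2 = 4 * m * (a - b) ^+ 2.
  by rewrite !exprMn sqr_sqrtr // real_normK ?num_real //; ring.
have v2 : `|v| ^+ 2 = v ^+ 2 by rewrite real_normK ?num_real.
set T := K * u + L * `|v|.
(* Cauchy--Schwarz for the vectors (K, L) and (u, |v|). *)
have CS : T ^+ 2 <= (K ^+ 2 + L ^+ 2) * (n1 * n2) ^+ 2.
  rewrite -uv -subr_ge0.
  have -> : (K ^+ 2 + L ^+ 2) * (u ^+ 2 + v ^+ 2) - T ^+ 2 = (K * `|v| - L * u) ^+ 2.
    by rewrite /T -v2; ring.
  exact: sqr_ge0.
have KLM : (K ^+ 2 + L ^+ 2) * (n1 * n2) ^+ 2 <= M ^+ 2.
  have -> : M ^+ 2 = K ^+ 2 * (n1 * n2) ^+ 2 +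
      (1 - m) ^+ 2 * ((a * n1) ^+ 2 - (b * n2) ^+ 2) * (n1 ^+ 2 - n2 ^+ 2).
    by rewrite /M /K; ring.
  rewrite mulrDl lerD2l L2.
  by have -> : 4 * m * (a - b) ^+ 2 * (n1 * n2) ^+ 2 =
    4 * m * (a * n1 * n2 - b * n2 * n1) ^+ 2 by ring.
have TM : T <= M.
  have [T0|T0] := lerP T 0; first exact: le_trans T0 M0.
  by move: (le_trans CS KLM); rewrite ler_sqr ?nnegrE // ltW.
rewrite normrM mulrA.
have -> : (1 - m) * (a * n1 ^+ 2 + b * n2 ^+ 2 - (a + b) * u) = M - K * u.
  by rewrite /M /K; ring.
by move: TM; rewrite -/L /T; lra.
Qed.

Section PowerProfile.
Variable R : realType.
Implicit Types a q x r eps : R.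

Lemma powR_bernoulli a x : 0 <= a -> a <= 1 -> 0 <= x -> x `^ a <= a * x + (1 - a).
Proof.
have [->|a_neq0] := eqVneq a 0; first by rewrite powRr0 mul0r subr0 add0r.
have [->|a_neq1] := eqVneq a 1; first by move=> _ _ x0; rewrite powRr1 // mul1r subrr addr0.
move=> a0 a1 x0.
have p0 : 0 < a^-1 by rewrite invr_gt0 lt_neqAle eq_sym a_neq0.
have q0 : 0 < (1 - a)^-1 by rewrite invr_gt0 subr_gt0 lt_neqAle a_neq1.
have := conjugate_powR (powR_ge0 x a) ler01 p0 q0.
have xa : (x `^ a) `^ a^-1 = x by rewrite -powRrM mulfV ?powRr1 // lt0r_neq0 // -invr_gt0.
rewrite !invrK addrC subrK mulr1 xa powR1 => /(_ erefl).
by rewrite mulrC mul1r.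
Qed.

Lemma le0_ger_powR (p x y : R) : p <= 0 -> 0 < x -> x <= y -> y `^ p <= x `^ p.
Proof.
move=> p0 x0 xy; have y0 := lt_le_trans x0 xy.
have : x `^ (- p) <= y `^ (- p).
  by apply: ge0_ler_powR; rewrite ?nnegrE ?oppr_ge0 ?(ltW x0) ?(ltW y0).
by rewrite !powRN lef_pV2 ?posrE ?powR_gt0.
Qed.

Lemma powR_ratio_le (q eps n1 n2 : R) : 0 <= q -> 0 <= eps ->
  0 < n2 -> n2 <= n1 ->
  n2 `^ (2 * q) * (n2 ^+ 2 + eps) `^ (- q) <= n1 `^ (2 * q) * (n1 ^+ 2 + eps) `^ (- q).
Proof.
move=> q0 eps0 n2_gt0 n21; have n1_gt0 := lt_le_trans n2_gt0 n21.
have [n1_ge0 n2_ge0] := (ltW n1_gt0, ltW n2_gt0).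
have den_gt0 n : 0 < n -> 0 < (n ^+ 2 + eps) `^ q.
  by move=> n0; rewrite powR_gt0 // ltr_wpDr // exprn_gt0.
have sqr_powR n : 0 < n -> n `^ (2 * q) = (n ^+ 2) `^ q.
  by move=> n0; rewrite powRrM powR_mulrn // ltW.
rewrite !powRN !sqr_powR // ler_pdivrMr ?den_gt0 // mulrAC.
rewrite ler_pdivlMr ?den_gt0 // -!powRM ?addr_ge0 ?sqr_ge0 //.
apply: ge0_ler_powR; rewrite ?nnegrE ?mulr_ge0 ?addr_ge0 ?sqr_ge0 //.
have : n2 ^+ 2 <= n1 ^+ 2 by rewrite ler_sqr ?nnegrE.
nra.
Qed.

Variable m : R.

(* Built from function combinators so that the [is_derive] lemmas apply. *)
Definition powR_gap : R -> R :=
  (1 - m) \*: (id * (fun y => y `^ m) - cst 1) - (1 + m) \*: (id - (fun y => y `^ m)).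

Lemma powR_gapE x : powR_gap x = (1 - m) * (x * x `^ m - 1) - (1 + m) * (x - x `^ m).
Proof. by []. Qed.

Lemma is_derive_powR_gap x : 0 < x ->
  is_derive x 1 powR_gap
    ((1 - m) * (x * (m * x `^ (m - 1)) + x `^ m) - (1 + m) * (1 - m * x `^ (m - 1))).
Proof.
move=> x0; have P := is_derive1_powR m x0.
have I := @is_derive_id R R^o x 1.
have C := @is_derive_cst R R^o R^o 1 x 1.
apply: is_derive_eq (is_deriveB (is_deriveZ (1 - m) (is_deriveB (is_deriveM I P) C))
                                (is_deriveZ (1 + m) (is_deriveB I P))) _.
by rewrite /= subr0 /GRing.scale /= mulr1.
Qed.

Lemma derive1_powR_gap_ge0 x : 0 <= m -> m <= 1 -> 0 < x -> 0 <= derive1 powR_gap x.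
Proof.
move=> m0 m1 x0; have D := is_derive_powR_gap x0; rewrite derive1E derive_val.
set s := x `^ (m - 1).
have s0 : 0 < s by rewrite powR_gt0.
have sx : s * x = x `^ m.
  by rewrite -[X in _ * X]powRr1 ?ltW // -powRD ?(gt_eqF x0) ?implybT // subrK.
have sx' : s * x `^ (1 - m) = 1.
  by rewrite -powRD ?(gt_eqF x0) ?implybT // addrA subrK subrr powRr0.
have : x `^ (1 - m) <= (1 - m) * x + m.
  have m'0 : 0 <= 1 - m by lra.
  have m'1 : 1 - m <= 1 by lra.
  by have := powR_bernoulli m'0 m'1 (ltW x0); rewrite opprB subrKC.
rewrite -sx; move/(ler_wpM2l (ltW s0)); rewrite sx' => h.
have -> : (1 - m) * (x * (m * s) + s * x) - (1 + m) * (1 - m * s) =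
  (1 + m) * (s * ((1 - m) * x + m) - 1) by ring.
by rewrite mulr_ge0 ?subr_ge0 //; lra.
Qed.

Lemma powR_gap_ge0 r : 0 <= m -> m <= 1 -> 1 <= r -> 0 <= powR_gap r.
Proof.
move=> m0 m1 r1.
have -> : 0 = powR_gap 1 by rewrite powR_gapE powR1 /=; ring.
have derivable_gap x : 1 <= x -> derivable powR_gap x 1.
  by move=> x1; have [] := is_derive_powR_gap (lt_le_trans ltr01 x1).
apply: (@ger0_derive1_le_cc R powR_gap 1 r).
- by move=> x; rewrite in_itv /= => /andP[/ltW x1 _]; exact: derivable_gap.
- move=> x; rewrite in_itv /= => /andP[x1 _].
  exact: derive1_powR_gap_ge0 m0 m1 (lt_trans ltr01 x1).
- apply: derivable_within_continuous => x; rewrite in_itv /= => /andP[x1 _].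
  exact: derivable_gap.
- by rewrite in_itv /= lexx r1.
- by rewrite in_itv /= r1 lexx.
- exact: r1.
Qed.

Lemma sector_cond_powR1 r : 0 <= m -> m <= 1 -> 1 <= r -> sector_cond m r (r `^ m) 1 1.
Proof.
move=> m0 m1 r1.
have := powR_gap_ge0 m0 m1 r1; rewrite powR_gapE /sector_cond.
have : 0 <= r - r `^ m by rewrite subr_ge0 ler1_powR.
set s := r `^ m; set G := _ - _ * (r - s) => Q0 G0; rewrite -subr_ge0.
(* With P := r s - 1 and Q := r - s, the gap G is (1 - m) P - (1 + m) Q and
   (s^2 - 1) (r^2 - 1) = P^2 - Q^2. *)
have -> : (1 - m) ^+ 2 * (s ^+ 2 - 1 ^+ 2) * (r ^+ 2 - 1 ^+ 2) - 4 * m * (s * 1 - 1 * r) ^+ 2 =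
  G * G + 2 * (G * ((1 + m) * (r - s))) by rewrite /G; ring.
by rewrite addr_ge0 ?mulr_ge0 // addr_ge0.
Qed.

Lemma sector_cond_powR n1 n2 : 0 <= m -> m <= 1 -> 0 < n2 -> n2 <= n1 ->
  sector_cond m n1 (n1 `^ m) n2 (n2 `^ m).
Proof.
move=> m0 m1 n2_gt0 n21.
have r1 : 1 <= n1 / n2 by rewrite ler_pdivlMr // mul1r.
have := sector_condM n2 (n2 `^ m) (sector_cond_powR1 m0 m1 r1).
by rewrite -powRM ?divr_ge0 ?ltW ?(lt_le_trans n2_gt0) // divfK ?gt_eqF // !mul1r.
Qed.

Lemma sector_cond_profile (eps n1 n2 : R) :
  0 <= m -> m <= 1 -> 0 <= eps -> 0 <= n1 -> 0 <= n2 ->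
  sector_cond m n1 ((n1 ^+ 2 + eps) `^ ((m - 1) / 2) * n1)
                n2 ((n2 ^+ 2 + eps) `^ ((m - 1) / 2) * n2).
Proof.
move=> m0 m1 eps0; wlog n21 : n1 n2 / n2 <= n1.
  move=> le_case n10 n20; have [n21|/ltW n12] := leP n2 n1; first exact: le_case.
  exact/sector_condC/le_case.
move=> n10; rewrite le0r => /predU1P[->|n2_gt0].
  rewrite /sector_cond !(mulr0, mul0r, subr0, sub0r, expr0n) /= oppr0 expr0n /= mulr0.
  by apply: mulr_ge0; [apply: mulr_ge0|]; exact: sqr_ge0.
have n1_gt0 := lt_le_trans n2_gt0 n21.
set q := (1 - m) / 2.
have q0 : 0 <= q by rewrite divr_ge0 // subr_ge0.
have -> : (m - 1) / 2 = - q by rewrite /q -mulNr opprB.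
have split n : 0 < n -> (n ^+ 2 + eps) `^ (- q) * n =
    n `^ (2 * q) * (n ^+ 2 + eps) `^ (- q) * n `^ m.
  move=> n0; rewrite mulrAC -powRD ?(gt_eqF n0) ?implybT // mulrC.
  by rewrite (_ : 2 * q + m = 1) ?powRr1 ?(ltW n0) // /q; field.
have a12 : (n1 ^+ 2 + eps) `^ (- q) <= (n2 ^+ 2 + eps) `^ (- q).
  apply: le0_ger_powR; first by rewrite oppr_le0.
    by rewrite ltr_wpDr // exprn_gt0.
  by rewrite lerD2r ler_sqr ?nnegrE ?(ltW n1_gt0) ?(ltW n2_gt0).
rewrite !split //; apply: sector_cond_scale.
- exact: m0.
- by rewrite n21 (ltW n2_gt0).
- exact: powR_ge0.
- by rewrite mulr_ge0 ?powR_ge0 // powR_ratio_le.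
- rewrite -!split // mulrAC; apply: ler_wpM2r; first exact: ltW.
  by apply: ler_wpM2r; first exact: ltW.
- exact: sector_cond_powR.
Qed.

End PowerProfile.



Lemma sector_cond_radial (R : rcfType) (m a b : R) (z1 z2 : R[i]) :
  0 <= m -> m <= 1 -> 0 <= a -> 0 <= b ->
  sector_cond m (Normc.normc z1) (a * Normc.normc z1) (Normc.normc z2) (b * Normc.normc z2) ->
  2 * Num.sqrt m * `|complex.Im ((a%:C * z1 - b%:C * z2) * conjc (z1 - z2))%C| <=
  (1 - m) * complex.Re ((a%:C * z1 - b%:C * z2) * conjc (z1 - z2))%C.
Proof.
case: z1 z2 => [x1 y1] [x2 y2] /= m0 m1 a0 b0.
have sqr_norm x y : Num.sqrt (x ^+ 2 + y ^+ 2) ^+ 2 = x ^+ 2 + y ^+ 2 :> R.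
  by rewrite sqr_sqrtr // addr_ge0 ?sqr_ge0.
set n1 := Num.sqrt (x1 ^+ 2 + y1 ^+ 2); set n2 := Num.sqrt (x2 ^+ 2 + y2 ^+ 2).
have uv : (x1 * x2 + y1 * y2) ^+ 2 + (x1 * y2 - x2 * y1) ^+ 2 = (n1 * n2) ^+ 2.
  by rewrite exprMn !sqr_norm; ring.
move=> /(sector_cond_bound m0 m1 a0 b0 uv); rewrite !sqr_norm => bound.
rewrite [X in `|X|](_ : _ = (a - b) * (x1 * y2 - x2 * y1)); last by ring.
rewrite [X in _ <= _ * X](_ : _ = a * (x1 ^+ 2 + y1 ^+ 2) + b * (x2 ^+ 2 + y2 ^+ 2)
  - (a + b) * (x1 * x2 + y1 * y2)) //; ring.
Qed.

Theorem lemma5p7 (R : realType) (m eps : R) (z1 z2 : R[i]) :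
  0 <= m -> m <= 1 -> 0 <= eps ->
  (m = 0 -> eps = 0 -> (z1 * z2 != 0)%C) ->
  2 * Num.sqrt m * `|complex.Im (Zme m eps z1 z2)| <= (1 - m) * complex.Re (Zme m eps z1 z2).
Proof.
move=> m0 m1 eps0 _.
have normc_ge0 (z : R[i]) : 0 <= Normc.normc z by case: z => x y; exact: sqrtr_ge0.
apply: sector_cond_radial; rewrite ?powR_ge0 //.
exact: sector_cond_profile.
Qed.
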